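(* Under the setup described in the context (a connected graph $G$ with $\mathrm{col}(G)=d\geq 3$, $M=K_1\vee G$ with apex $w$, and an $m$-fold cover $\mathcal{H}=(L,H)$ of $M$ with $m\geq d+3$ in which $E_H(L(u),L(v))$ is a perfect matching for every $uv\in E(M)$): if $L(w)$ contains at least $m-1$ level vertices, then there is a natural bijection between the $\mathcal{H}$-colorings of $M$ and the proper $m$-colorings of $M$; consequently $P_{DP}(M,\mathcal{H})=P(M,m)$.
   Context: All graphs are finite and simple. $\mathrm{col}(G)$ is the smallest $d$ such that some ordering of $V(G)$ has each vertex with at most $d-1$ earlier neighbors. $M=K_1\vee G$ is the join of $G$ with a single new vertex $w$. $P(M,m)$ is the chromatic polynomial. A cover of a graph $G$ is a pair $\mathcal{H}=(L,H)$ where $H$ is a graph and $L:V(G)\to\mathcal{P}(V(H))$ satisfies: (1) the sets $L(u)$ partition $V(H)$; (2) each $H[L(u)]$ is complete; (3) if $E_H(L(u),L(v))\neq\emptyset$ then $u=v$ or $uv\in E(G)$; (4) if $uv\in E(G)$ then $E_H(L(u),L(v))$ is a matching. $E_H(S,U)$ is the set of edges of $H$ between $S$ and $U$; the cover is $m$-fold if all $|L(u)|=m$; an $\mathcal{H}$-coloring is an independent set of $H$ of size $|V(G)|$, and $P_{DP}(G,\mathcal{H})$ counts them. Natural bijection: for an $m$-fold cover $\mathcal{H}$ of a graph $G$, the elements of each $L(v)$ can be labeled $\{(v,j):j\in[m]\}$ so that $(u,j)(v,j)\in E(H)$ for all $uv\in E(G)$ and $j\in[m]$. Setup: write $L(w)=\{(w,j):j\in[m]\}$;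 for $j\in[m]$ and $v\in V(G)$ let $H^{(j)}=H-N_H[(w,j)]$ and $L^{(j)}(v)=L(v)\setminus N_H((w,j))$, so $\mathcal{H}^{(j)}=(L^{(j)},H^{(j)})$ is an $(m-1)$-fold cover of $G$. Cross-edges of $H^{(j)}$ are its edges joining $L^{(j)}(x)$ and $L^{(j)}(y)$ for distinct $x,y\in V(G)$. The vertex $(w,t)$ is a level vertex if $H^{(t)}$ has exactly $|E(G)|(m-1)$ cross-edges. *)

From mathcomp Require Import all_boot.
Set Implicit Arguments. Unset Strict Implicit. Unset Printing Implicit Defensive.

Definition simple_graph (T : finType) (e : rel T) : Prop :=
  symmetric e /\ irreflexive e.

Definition connected_graph (T : finType) (e : rel T) : Prop :=
  (0 < #|T|) /\ forall x y : T, connect e x y.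

Definition num_edges (T : finType) (e : rel T) : nat :=
  #|[set p : T * T | e p.1 p.2]| %/ 2.

Definition ordering_ok (T : finType) (e : rel T) (d : nat) (s : seq T) : bool :=
  perm_eq s (enum T) &&
  all (fun x => count (e x) (take (index x s) s) <= d.-1) s.

Definition col_le (T : finType) (e : rel T) (d : nat) : Prop :=
  exists s : seq T, ordering_ok e d s.

Definition coloring_number (T : finType) (e : rel T) (d : nat) : Prop :=
  col_le e d /\ forall d', col_le e d' -> d <= d'.

(* The join M = K_1 \/ G; the apex w is [None]. *)
Definition join_apex (T : finType) (e : rel T) : rel (option T) :=
  fun x y => match x, y with
             | Some a, Some b => e a b
             | None, Some _ | Some _, None => true
             | None, None => false
             end.

Definition is_cover (T HV : finType) (e : rel T) (h : rel HV)
    (L : T -> {set HV}) : Prop :=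
  simple_graph h /\
  (forall x : HV, exists u, x \in L u) /\
  (forall u v x, x \in L u -> x \in L v -> u = v) /\
  (forall u x y, x \in L u -> y \in L u -> x != y -> h x y) /\
  (forall u v x y, x \in L u -> y \in L v -> h x y -> u = v \/ e u v) /\
  (forall u v x y z, e u v -> x \in L u -> y \in L v -> z \in L v ->
      h x y -> h x z -> y = z).

Definition m_fold (T HV : finType) (L : T -> {set HV}) (m : nat) : Prop :=
  forall u, #|L u| = m.

Definition perfect_matchings (T HV : finType) (e : rel T) (h : rel HV)
    (L : T -> {set HV}) : Prop :=
  forall u v x, e u v -> x \in L u -> exists2 y, y \in L v & h x y.

Definition independent (HV : finType) (h : rel HV) (I : {set HV}) : bool :=
  [forall x in I, forall y in I, ~~ h x y].

Definition DP_coloring (T HV : finType) (h : rel HV) (I : {set HV}) : bool :=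
  independent h I && (#|I| == #|T|).

Definition P_DP (T HV : finType) (h : rel HV) : nat :=
  #|[set I : {set HV} | DP_coloring T h I]|.

Definition proper_coloring (T : finType) (e : rel T) (m : nat)
    (c : {ffun T -> 'I_m}) : bool :=
  [forall u, forall v, e u v ==> (c u != c v)].

Definition chrom_count (T : finType) (e : rel T) (m : nat) : nat :=
  #|[set c : {ffun T -> 'I_m} | proper_coloring e c]|.

(* Ordered cross pairs of H^(t) = H - N_H[t], with L^(t)(v) = L(v) \ N_H(t),
   for a cover of K_1 \/ G, t in L(w). *)
Definition cross_edges_after (V HV : finType) (h : rel HV)
    (L : option V -> {set HV}) (t : HV) : nat :=
  #|[set p : HV * HV |
      [&& p.1 != t, ~~ h t p.1, p.2 != t, ~~ h t p.2, h p.1 p.2 &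
       [exists a : V, exists b : V,
          [&& a != b, p.1 \in L (Some a) & p.2 \in L (Some b)]]]]| %/ 2.

Definition level_vertex (V HV : finType) (e : rel V) (h : rel HV)
    (L : option V -> {set HV}) (m : nat) (t : HV) : bool :=
  cross_edges_after h L t == num_edges e * m.-1.

(* Each t in L(w) has a unique partner
   in every L(v), so "t together with its partners" is a candidate colour
   class.  The cross edges of H^(t)
      split according to the edge ab of G they lie over; over every edge there
      are at most m-1 of them, and at most m-2 when the partners of t in L(a)
      and L(b) are non-adjacent.  Hence a level vertex t is "straight": its
      partners are pairwise adjacent along all edges of G.
   2. If m-1 vertices of L(w) are level, the remaining one is straight too,
      by chasing the matchings around a triangle w-a-b.  Labelling the
      vertices of L(w) by [m] and propagating the labels to the partners gives
      a natural labelling g : V(M) x [m] -> V(H) (a bijection sending each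
      (u,j) into L(u) and each edge uv of M to an edge (u,j)(v,j) of H).
   3. For ANY cover with a natural labelling, c |-> {g(u,c u)} is a bijection
      from proper m-colourings onto H-colourings, so P_DP = P(M,m). *)
From mathcomp Require Import all_boot zify.
Set Implicit Arguments. Unset Strict Implicit. Unset Printing Implicit Defensive.

(* A symmetric irreflexive relation has an even number of arcs (ordered
   adjacent pairs): the swap (x,y) |-> (y,x) is a fixed-point-free involution
   exchanging the arcs going up and down in the enumeration order. *)
Lemma card_arcs_even (T : finType) (r : rel T) :
  symmetric r -> irreflexive r -> 2 %| #|[set p : T * T | r p.1 p.2]|.
Proof.
move=> r_sym r_irr.
set S := [set p : T * T | r p.1 p.2].
set Up := [set p : T * T | enum_rank p.1 < enum_rank p.2].
have swap_inj : injective (fun p : T * T => (p.2, p.1)) by move=> [x y] [x' y'] [-> ->].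
have down : S :\: Up = (fun p : T * T => (p.2, p.1)) @^-1: (S :&: Up).
  apply/setP=> [[x y]]; rewrite !inE /= r_sym.
  case rxy: (r y x); last by rewrite andbF.
  have nxy : enum_rank x != enum_rank y.
    by apply: contraTneq rxy => /enum_rank_inj ->; rewrite r_irr.
  move: nxy; rewrite -(inj_eq val_inj) /=; lia.
by rewrite -(cardsID Up S) down card_preimset // addnn -mul2n dvdn_mulr.
Qed.

Lemma half_ltn n k c : 2 %| n -> k < n * c -> k %/ 2 < n %/ 2 * c.
Proof. by move=> /dvdnP[n' ->]; rewrite mulnK // ltn_divLR //; lia. Qed.

Lemma card_le_inj (X Y : finType) (D : {set X}) (B : {set Y}) (f : X -> Y) :
  {in D &, injective f} -> {in D, forall x, f x \in B} -> #|D| <= #|B|.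
Proof.
move=> f_inj fB; rewrite -(card_in_imset f_inj); apply: subset_leq_card.
by apply/subsetP=> y /imsetP[x xD ->]; apply: fB.
Qed.

Section Cover.
Variables (T HV : finType) (J : rel T) (h : rel HV) (L : T -> {set HV}).
Hypothesis Hcov : is_cover J h L.

Lemma cover_sym : symmetric h.
Proof. by case: Hcov => [[]]. Qed.

Lemma cover_irr : irreflexive h.
Proof. by case: Hcov => [[]]. Qed.

Lemma cover_total x : exists u, x \in L u.
Proof. by case: Hcov => _ [H _]; apply: H. Qed.

Lemma cover_disjoint u v x : x \in L u -> x \in L v -> u = v.
Proof. by case: Hcov => _ [_ [H _]]; apply: H. Qed.

Lemma cover_clique u x y : x \in L u -> y \in L u -> x != y -> h x y.
Proof. by case: Hcov => _ [_ [_ [H _]]]; apply: H. Qed.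

Lemma cover_local u v x y : x \in L u -> y \in L v -> h x y -> u = v \/ J u v.
Proof. by case: Hcov => _ [_ [_ [_ [H _]]]]; apply: H. Qed.

Lemma cover_matching u v x y z : J u v -> x \in L u -> y \in L v -> z \in L v ->
  h x y -> h x z -> y = z.
Proof. by case: Hcov => _ [_ [_ [_ [_ H]]]]; apply: H. Qed.

Section Mates.
Hypothesis J_sym : symmetric J.
Hypothesis Hpm : perfect_matchings J h L.

Definition mate (v : T) (x : HV) : HV := odflt x [pick y in L v | h x y].

Lemma mateP u v x : J u v -> x \in L u -> mate v x \in L v /\ h x (mate v x).
Proof.
move=> Juv xL; rewrite /mate; case: pickP => [y /andP[-> ->] //| none].
by have [y yL hy] := Hpm Juv xL; have := none y; rewrite yL hy.
Qed.

Lemma mate_unique u v x y : J u v -> x \in L u -> y \in L v -> h x y -> mate v x = y.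
Proof.
move=> Juv xL yL hxy; have [mL hm] := mateP Juv xL.
exact: cover_matching Juv xL mL yL hm hxy.
Qed.

Lemma mate_inj u v x1 x2 : J u v -> x1 \in L u -> x2 \in L u ->
  mate v x1 = mate v x2 -> x1 = x2.
Proof.
move=> Juv x1L x2L same.
have [mL h1] := mateP Juv x1L; have [_ h2] := mateP Juv x2L.
rewrite same in mL h1; rewrite cover_sym in h1; rewrite cover_sym in h2.
have Jvu : J v u by rewrite J_sym.
exact: cover_matching Jvu mL x1L x2L h1 h2.
Qed.
End Mates.

Section NaturalLabelling.
Variables (m : nat) (g : T * 'I_m -> HV).

Hypothesis g_bij : bijective g.
Hypothesis g_list : forall u j, g (u, j) \in L u.
Hypothesis g_edge : forall u v j, J u v -> h (g (u, j)) (g (v, j)).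

Let g_inj : injective g := bij_inj g_bij.

Lemma h_label_edge u v i j : J u v -> h (g (u, i)) (g (v, j)) = (i == j).
Proof.
move=> Juv; have [-> | nij] := eqVneq i j; first exact: g_edge.
apply/negbTE/negP => hij.
have := cover_matching Juv (g_list u i) (g_list v i) (g_list v j) (g_edge i Juv) hij.
by move/g_inj => [eij]; rewrite eij eqxx in nij.
Qed.

Lemma h_label_list u i j : h (g (u, i)) (g (u, j)) = (i != j).
Proof.
have [-> | nij] := eqVneq i j; first by rewrite cover_irr.
by apply: cover_clique (g_list u i) (g_list u j) _; apply: contra nij => /eqP /g_inj [->].
Qed.

Lemma h_label_far u v i j : u != v -> ~~ J u v -> ~~ h (g (u, i)) (g (v, j)).
Proof.
move=> nuv nJ; apply/negP => hh.
by case: (cover_local (g_list u i) (g_list v j) hh) => E; [rewrite E eqxx in nuv | rewrite E in nJ].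
Qed.

Definition colour_set (c : {ffun T -> 'I_m}) : {set HV} := [set g (u, c u) | u : T].

Lemma card_colour_set c : #|colour_set c| = #|T|.
Proof. by rewrite card_imset // => u1 u2 /g_inj []. Qed.

Lemma colour_set_inj : injective colour_set.
Proof.
move=> c1 c2 same; apply/ffunP => u.
have : g (u, c1 u) \in colour_set c2 by rewrite -same; apply/imsetP; exists u.
by case/imsetP=> v _ /g_inj [<- ->].
Qed.

Lemma proper_iff_DP c : proper_coloring J c <-> DP_coloring T h (colour_set c).
Proof.
rewrite /DP_coloring card_colour_set eqxx andbT /independent /proper_coloring; split.
  move=> /forallP proper; apply/forall_inP => _ /imsetP[u _ ->].
  apply/forall_inP => _ /imsetP[v _ ->].
  have [<- | nuv] := eqVneq u v; first by rewrite h_label_list negbK.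
  case Juv: (J u v); last by apply: h_label_far => //; rewrite Juv.
  by rewrite h_label_edge //; move: (proper u) => /forallP /(_ v); rewrite Juv.
move=> /forall_inP indep; apply/forallP => u; apply/forallP => v; apply/implyP => Juv.
have mem w : g (w, c w) \in colour_set c by apply/imsetP; exists w.
by have /forall_inP /(_ _ (mem v)) := indep _ (mem u); rewrite h_label_edge.
Qed.

(* Every H-colouring meets each list exactly once, hence is a transversal. *)
Lemma DP_colour_set I : DP_coloring T h I -> exists c, I = colour_set c.
Proof.
move=> /andP[/forall_inP indep /eqP cardI].
have [ginv _ ginvK] := g_bij.
have ginv_list y : y \in L (ginv y).1.
  by rewrite -{1}(ginvK y); case: (ginv y) => u j; apply: g_list.
have list_inj : {in I &, injective (fun y => (ginv y).1)}.
  move=> x y xI yI same; apply/eqP/negPn/negP => nxy.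
  have yL : y \in L (ginv x).1 by rewrite same ginv_list.
  by move/forall_inP: (indep x xI) => /(_ y yI); rewrite (cover_clique (ginv_list x) yL nxy).
have meets u : exists j, g (u, j) \in I.
  have : u \in [set (ginv y).1 | y in I].
    suff -> : [set (ginv y).1 | y in I] = setT by rewrite inE.
    by apply/eqP; rewrite eqEcard subsetT cardsT card_in_imset // cardI leqnn.
  case/imsetP=> y yI ->; exists (ginv y).2.
  by rewrite -surjective_pairing ginvK.
have [c cI] := fin_all_exists meets.
exists [ffun u => c u]; apply/eqP; rewrite eq_sym eqEcard card_colour_set cardI leqnn andbT.
by apply/subsetP => _ /imsetP[u _ ->]; rewrite ffunE.
Qed.

Lemma DP_count : P_DP T h = chrom_count J m.
Proof.
rewrite /P_DP /chrom_count -(card_imset _ colour_set_inj).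
congr #|pred_of_set _|; apply/setP => I; rewrite inE; apply/idP/imsetP.
  by move=> /[dup] /DP_colour_set [c ->] /proper_iff_DP pc; exists c; rewrite ?inE.
by move=> [c]; rewrite inE => /proper_iff_DP dc ->.
Qed.

End NaturalLabelling.
End Cover.

Section Apex.
Variables (V HV : finType) (e : rel V) (h : rel HV) (L : option V -> {set HV}) (m : nat).
Hypothesis He : simple_graph e.
Hypothesis Hcov : is_cover (join_apex e) h L.
Hypothesis Hm : m_fold L m.
Hypothesis Hpm : perfect_matchings (join_apex e) h L.

Local Notation J := (join_apex e).

Lemma join_sym : symmetric J.
Proof. by case: He => e_sym _ [a|] [b|] //=; rewrite e_sym. Qed.

Lemma apex_adj v : J None (Some v).
Proof. by []. Qed.

Definition partner (t : HV) (u : option V) : HV :=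
  if u is Some _ then mate h L u t else t.

Lemma partner_list t u : t \in L None -> partner t u \in L u.
Proof. by case: u => [v|] tL //; case: (mateP Hpm (apex_adj v) tL). Qed.

Lemma partner_adj t v : t \in L None -> h t (partner t (Some v)).
Proof. by move=> tL; case: (mateP Hpm (apex_adj v) tL). Qed.

Lemma partner_unique t v y : t \in L None -> y \in L (Some v) -> h t y ->
  partner t (Some v) = y.
Proof. exact: (mate_unique Hcov Hpm (apex_adj v)). Qed.

Lemma partner_inj t1 t2 v : t1 \in L None -> t2 \in L None ->
  partner t1 (Some v) = partner t2 (Some v) -> t1 = t2.
Proof. exact: (mate_inj Hcov join_sym Hpm (apex_adj v)). Qed.

(* t is straight if its partners are adjacent along every edge of G, i.e.
   t and its partners span a copy of M in H. *)
Definition straight (t : HV) : Prop :=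
  forall a b, e a b -> h (partner t (Some a)) (partner t (Some b)).

(* The ordered cross pairs of H^(t) and the arcs of G, whose halves are the
   two sides of the defining equation of a level vertex. *)
Definition cross_pairs (t : HV) : {set HV * HV} :=
  [set p : HV * HV |
      [&& p.1 != t, ~~ h t p.1, p.2 != t, ~~ h t p.2, h p.1 p.2 &
       [exists a : V, exists b : V,
          [&& a != b, p.1 \in L (Some a) & p.2 \in L (Some b)]]]].

Definition arcs : {set V * V} := [set p : V * V | e p.1 p.2].

Lemma level_vertexE t :
  level_vertex e h L m t = (#|cross_pairs t| %/ 2 == #|arcs| %/ 2 * m.-1).
Proof. by []. Qed.

Section LevelIsStraight.
Variables (t : HV) (a b : V).
Hypothesis tL : t \in L None.

(* The vertex of G below x (a is a dummy value for x in L(w)). *)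
Let base (x : HV) : V := odflt a [pick v | x \in L (Some v)].

Let base_list x v : x \in L (Some v) -> base x = v.
Proof.
rewrite /base => xL; case: pickP => [v' xL' | /(_ v)]; last by rewrite xL.
by case: (cover_disjoint Hcov xL' xL).
Qed.

Let arc_of (p : HV * HV) : V * V := (base p.1, base p.2).

Lemma cross_pair_over p : p \in cross_pairs t ->
  [/\ arc_of p \in arcs, p.1 \in L (Some (arc_of p).1), p.2 \in L (Some (arc_of p).2)
    & [/\ ~~ h t p.1, ~~ h t p.2 & h p.1 p.2]].
Proof.
rewrite inE => /and5P[_ n1 _ n2 /andP[h12 /existsP[a' /existsP[b' /and3P[nab p1 p2]]]]].
rewrite /arc_of /= (base_list p1) (base_list p2) inE /=; split => //.
by case: (cover_local Hcov p1 p2 h12) => // -[same]; rewrite same eqxx in nab.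
Qed.

Let fiber (q : V * V) : {set HV * HV} := [set p in cross_pairs t | arc_of p == q].

Lemma fiber_fst_inj q : {in fiber q &, injective fst}.
Proof.
move=> p p' /setIdP[pP /eqP fp] /setIdP[pP' /eqP fp'] same.
have [arc x1 y2 [_ _ hxy]] := cross_pair_over pP.
have [_ _ y2' [_ _ hxy']] := cross_pair_over pP'.
rewrite fp inE in arc x1 y2; rewrite fp' in y2'; clear pP pP' fp fp'.
move: p p' same x1 y2 y2' hxy hxy' => [x y] [x' y'] /= <- x1 y2 y2' hxy hxy'.
by rewrite (cover_matching Hcov (u:=Some q.1) (v:=Some q.2) arc x1 y2 y2' hxy hxy').
Qed.

(* The first vertex avoids the partner of t, so a fiber has at most m-1
   elements. *)
Lemma fiber_small q : #|fiber q| <= m.-1.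
Proof.
rewrite -(Hm (Some q.1)) (cardsD1 (partner t (Some q.1))) partner_list // add1n /=.
apply: (card_le_inj (@fiber_fst_inj q)) => p /setIdP[pP /eqP fp].
case: (cross_pair_over pP) => _; rewrite fp => x1 _ [nx _ _]; rewrite !inE x1 andbT.
by apply: contra nx => /eqP ->; apply: partner_adj.
Qed.

(* Over a bent edge ab the first vertex also avoids the neighbour z in L(a)
   of the partner of t in L(b), leaving at most m-2 cross pairs. *)
Lemma fiber_bent : e a b -> ~~ h (partner t (Some a)) (partner t (Some b)) ->
  #|fiber (a, b)| <= m.-2.
Proof.
move=> eab bent.
have tb := partner_list (Some b) tL.
have eba : J (Some b) (Some a) by rewrite join_sym.
have [z zL hz] := Hpm eba tb.
have nz : partner t (Some a) != z by apply: contraNneq bent => ->; rewrite (cover_sym Hcov).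
have -> : m.-2 = #|L (Some a) :\: [set partner t (Some a); z]|.
  rewrite cardsD (setIidPr _); last first.
    by apply/subsetP=> y; rewrite !inE => /orP[]/eqP->; rewrite ?partner_list.
  by rewrite cards2 nz Hm subn2.
apply: (card_le_inj (@fiber_fst_inj (a, b))) => p /setIdP[pP /eqP fp].
case: (cross_pair_over pP); rewrite fp /= => _ x1 y2 [nx ny hxy].
rewrite !inE x1 andbT negb_or; apply/andP; split.
  by apply: contra nx => /eqP ->; apply: partner_adj.
apply/eqP=> xz; rewrite {}xz in hxy.
rewrite (cover_sym Hcov) in hz.
have := cover_matching Hcov (u:=Some a) (v:=Some b) eab zL y2 tb hxy hz.
by move=> yt; move: ny; rewrite yt partner_adj.
Qed.

Lemma cross_pairs_sum : #|cross_pairs t| = \sum_(q in arcs) #|fiber q|.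
Proof.
rewrite -sum1_card (partition_big arc_of (mem arcs)); last first.
  by move=> p /cross_pair_over [].
apply: eq_bigr => q _; rewrite -sum1_card; apply: eq_bigl => p.
by rewrite !inE.
Qed.

(* A bent edge costs at least one cross edge, so t cannot be level. *)
Lemma bent_not_level : 1 < m -> e a b ->
  ~~ h (partner t (Some a)) (partner t (Some b)) -> ~~ level_vertex e h L m t.
Proof.
move=> m_gt1 eab bent; have ab_arc : (a, b) \in arcs by rewrite inE.
have deficit : #|cross_pairs t| < #|arcs| * m.-1.
  rewrite cross_pairs_sum -sum_nat_const (bigD1 (a, b)) //= [X in _ < X](bigD1 (a, b)) //=.
  rewrite -addSn; apply: leq_add; last by apply: leq_sum => q _; apply: fiber_small.
  by have := fiber_bent eab bent; move: #|fiber (a, b)|; lia.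
have [e_sym e_irr] := He.
by rewrite level_vertexE neq_ltn half_ltn ?orbT ?card_arcs_even.
Qed.

End LevelIsStraight.

Lemma level_straight t : 1 < m -> t \in L None -> level_vertex e h L m t -> straight t.
Proof.
move=> m_gt1 tL lv a b eab; apply/idPn => bent.
by have := bent_not_level tL m_gt1 eab bent; rewrite lv.
Qed.

(* If m-1 vertices of L(w) are level, any remaining x is straight as well:
   following the matchings x -> y in L(a) -> z in L(b) -> t in L(w), the
   vertex t is either x itself or level, and in the latter case y and the
   partner of t in L(a) are both adjacent to z, forcing t = x. *)
Lemma all_straight x : 1 < m ->
  m.-1 <= #|[set t in L None | level_vertex e h L m t]| ->
  x \in L None -> straight x.
Proof.
set S := [set t in L None | _] => m_gt1 many xL a b eab.
have [lx | nlx] := boolP (level_vertex e h L m x); first exact: level_straight.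
have others t : t \in L None -> t != x -> level_vertex e h L m t.
  have SE : S = L None :\ x.
    have rest : #|L None :\ x| = m.-1 by rewrite -(Hm None) (cardsD1 x (L None)) xL add1n.
    apply/eqP; rewrite eqEcard rest many andbT.
    by apply/subsetP=> s; rewrite !inE => /andP[-> ls]; rewrite andbT; apply: contraTneq ls => ->.
  move=> tL ntx; have : t \in S by rewrite SE !inE ntx.
  by rewrite inE => /andP[].
have yL := partner_list (Some a) xL; set y := partner x (Some a) in yL *.
have Jab : J (Some a) (Some b) by [].
have [z zL hyz] := Hpm Jab yL.
have bw : J (Some b) None by [].
have [t tL hzt] := Hpm bw zL.
rewrite (cover_sym Hcov) in hzt.
have [tx | ntx] := eqVneq t x.
  by rewrite tx in hzt; rewrite (partner_unique xL zL hzt).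
have tz := partner_unique tL zL hzt.
have := level_straight m_gt1 tL (others t tL ntx) eab; rewrite tz => htz.
rewrite (cover_sym Hcov) in hyz; rewrite (cover_sym Hcov) in htz.
have eba : J (Some b) (Some a) by rewrite join_sym.
have := cover_matching Hcov eba zL yL (partner_list (Some a) tL) hyz htz.
by move/(partner_inj xL tL) => xt; rewrite xt eqxx in ntx.
Qed.

Section Labelling.
Hypothesis m_gt1 : 1 < m.
Hypothesis many_level : m.-1 <= #|[set t in L None | level_vertex e h L m t]|.

Definition apex_label (j : 'I_m) : HV := enum_val (cast_ord (esym (Hm None)) j).

Definition natural_label (p : option V * 'I_m) : HV := partner (apex_label p.2) p.1.

Lemma apex_label_list j : apex_label j \in L None.
Proof. exact: enum_valP. Qed.

Lemma apex_label_inj : injective apex_label.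
Proof. by move=> i j /enum_val_inj /cast_ord_inj. Qed.

Lemma apex_label_surj x : x \in L None -> exists j, apex_label j = x.
Proof.
move=> xL; exists (cast_ord (Hm None) (enum_rank_in xL x)).
by rewrite /apex_label cast_ordK enum_rankK_in.
Qed.

Lemma natural_label_list u j : natural_label (u, j) \in L u.
Proof. exact: partner_list (apex_label_list j). Qed.

Lemma natural_label_edge u v j : J u v ->
  h (natural_label (u, j)) (natural_label (v, j)).
Proof.
rewrite /natural_label /=; case: u v => [a|] [b|] //= Juv.
- exact: (all_straight m_gt1 many_level (apex_label_list j) Juv).
- by rewrite (cover_sym Hcov); apply: partner_adj (apex_label_list j).
- exact: partner_adj (apex_label_list j).
Qed.

Lemma natural_label_bij : bijective natural_label.
Proof.
have label_inj : injective natural_label.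
  move=> [u i] [v j] same.
  have uv : u = v.
    by apply: (cover_disjoint Hcov (natural_label_list u i)); rewrite same natural_label_list.
  subst v; congr (_, _); apply: apex_label_inj.
  by case: u same => // v; apply: partner_inj; apply: apex_label_list.
apply: (inj_card_bij label_inj).
rewrite -(card_codom label_inj); apply: subset_leq_card; apply/subsetP=> y _.
have [[v|] yL] := cover_total Hcov y.
  have vw : J (Some v) None by [].
  have [t tL hyt] := Hpm vw yL.
  have [j tj] := apex_label_surj tL.
  rewrite (cover_sym Hcov) in hyt; rewrite -tj in tL hyt.
  by apply/codomP; exists (Some v, j); apply/esym; apply: partner_unique tL yL hyt.
have [j yj] := apex_label_surj yL.
by apply/codomP; exists (None, j); rewrite /natural_label /= yj.
Qed.

End Labelling.
End Apex.

(* The natural labelling exists, and the correspondence of layer 3 applies. *)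
Theorem mainTheorem16 (V HV : finType) (e : rel V) (h : rel HV)
    (L : option V -> {set HV}) (d m : nat) :
  simple_graph e -> connected_graph e ->
  coloring_number e d -> 3 <= d ->
  d + 3 <= m ->
  is_cover (join_apex e) h L -> m_fold L m ->
  perfect_matchings (join_apex e) h L ->
  m.-1 <= #|[set t in L None | level_vertex e h L m t]| ->
  (exists g : option V * 'I_m -> HV,
     [/\ bijective g,
         (forall u j, g (u, j) \in L u),
         (forall u v j, join_apex e u v -> h (g (u, j)) (g (v, j))),
         (forall c : {ffun option V -> 'I_m},
            proper_coloring (join_apex e) c <->
            DP_coloring (option V) h [set g (u, c u) | u : option V]) &
         (forall I : {set HV}, DP_coloring (option V) h I ->
            exists c : {ffun option V -> 'I_m},
              I = [set g (u, c u) | u : option V])])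
  /\ P_DP (option V) h = chrom_count (join_apex e) m.
Proof.
move=> He _ _ d_ge3 m_large Hcov Hm Hpm many_level.
have m_gt1 : 1 < m by lia.
set g := natural_label h Hm.
have g_bij : bijective g := natural_label_bij He Hcov Hm Hpm.
have g_list : forall u j, g (u, j) \in L u := natural_label_list Hm Hpm.
have g_edge : forall u v j, join_apex e u v -> h (g (u, j)) (g (v, j)).
  by move=> u v j; apply: (natural_label_edge He Hcov Hm Hpm m_gt1 many_level).
split; last exact: (DP_count Hcov g_bij g_list g_edge).
exists g; split => //.
- exact: (proper_iff_DP Hcov g_bij g_list g_edge).
- exact: (DP_colour_set Hcov g_bij g_list).
Qed.
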